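(* Let $p\ge1$, $m=2^p$, and inject two identical bosons in input modes $1$ and $2$ of the Sylvester interferometer $U_m=\frac{1}{\sqrt m}H(m)$. Among all $\frac12 m(m+1)$ two-particle output states $(i,j)$ with $1\le i\le j\le m$, the number of suppressed states is $m^2/4$, so the fraction of suppressed states is $\frac{1}{2}\cdot\frac{m}{m+1}$.
   Context: For $m=2^p$, the Sylvester matrix $H(m)$ is defined recursively by $H(1)=[1]$ and $H(2^p)=\begin{bmatrix}H(2^{p-1})&H(2^{p-1})\\ H(2^{p-1})&-H(2^{p-1})\end{bmatrix}$, rows and columns indexed $1,\dots,m$. An $n$-particle state on $m$ modes is a nondecreasing tuple $\vec t=(t_1\le\dots\le t_n)$ with $t_i\in\{1,\dots,m\}$; $\mu_k(\vec t)=|\{i:t_i=k\}|$. For input $\vec s$ and output $\vec t$, the scattering matrix is $S_{i,j}=U_{t_i,s_j}$; the bosonic amplitude is $\mathrm{perm}\,S/\sqrt{\prod_k\mu_k(\vec s)!\prod_k\mu_k(\vec t)!}$. An output state is suppressed if its amplitude is zero. *)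

From HB Require Import structures.
From mathcomp Require Import all_boot all_order all_algebra all_fingroup all_field.
Set Implicit Arguments. Unset Strict Implicit. Unset Printing Implicit Defensive.
Import Order.TTheory GRing.Theory Num.Theory.
Local Open Scope ring_scope.

Lemma sylv_dim (p : nat) : (2 ^ p + 2 ^ p = 2 ^ p.+1)%N.
Proof. by rewrite expnS mul2n addnn. Qed.

(* Sylvester matrix H(2^p), defined by the block recursion
   H(1) = [1], H(2^p) = [[H, H], [H, -H]] with H = H(2^(p-1)).
   Rows/columns are indexed 0..m-1 (paper: 1..m). *)
Fixpoint sylvester (p : nat) : 'M[algC]_(2 ^ p) :=
  match p with
  | 0 => 1%:M
  | p'.+1 =>
      castmx (sylv_dim p', sylv_dim p')
        (block_mx (sylvester p') (sylvester p') (sylvester p') (- sylvester p'))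
  end.

Definition sylvU (p : nat) : 'M[algC]_(2 ^ p) :=
  (sqrtC (2 ^ p)%:R)^-1 *: sylvester p.

Definition permanent (n : nat) (A : 'M[algC]_n) : algC :=
  \sum_(s : 'S_n) \prod_(i < n) A i (s i).

(* An n-particle state on m modes: a nondecreasing n-tuple of modes. *)
Definition is_state (m n : nat) (t : n.-tuple 'I_m) : bool :=
  sorted (fun a b : 'I_m => (a <= b)%N) t.

Definition occ (m n : nat) (t : n.-tuple 'I_m) (k : 'I_m) : nat := count_mem k t.

Definition scattering (m n : nat) (U : 'M[algC]_m) (s t : n.-tuple 'I_m) : 'M[algC]_n :=
  \matrix_(i < n, j < n) U (tnth t i) (tnth s j).

Definition amplitude (m n : nat) (U : 'M[algC]_m) (s t : n.-tuple 'I_m) : algC :=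
  permanent (scattering U s t) /
  sqrtC ((\prod_(k < m) (occ s k)`! * \prod_(k < m) (occ t k)`!)%N)%:R.

Definition suppressed (m n : nat) (U : 'M[algC]_m) (s t : n.-tuple 'I_m) : bool :=
  amplitude U s t == 0.

From HB Require Import structures.
From mathcomp Require Import all_boot all_order all_algebra all_fingroup all_field.
From mathcomp Require Import zify ring.
Import Order.TTheory GRing.Theory Num.Theory.

(* Column 0 of H(m) is constant and, for m >= 2, column 1 is (-1)^i in row i
   (rows counted from 0).  Hence the permanent for input modes {0, 1} and output
   (i, j) is (1/m) ((-1)^i + (-1)^j), which vanishes exactly when i and j have
   opposite parity.  Summing over i <= j is half of summing over all (i, j) plus
   the diagonal, so there are m(m+1)/2 output states, and (m/2)^2 of them pair an
   even mode with an odd one. *)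

Set Implicit Arguments.
Unset Strict Implicit.
Unset Printing Implicit Defensive.

Local Open Scope ring_scope.

Lemma split_ord_mod n (x : 'I_(n + n)) (x' : 'I_n) :
  (x %% n)%N = x' -> x = if (n <= x)%N then rshift n x' else lshift n x'.
Proof.
move=> hx; case: leqP => h; apply: val_inj => /=; rewrite -hx; last by rewrite modn_small.
have hxn : (x - n < n)%N by have := ltn_ord x; lia.
by rewrite -{2}(subnK h) modnDr modn_small // addnC subnK.
Qed.

Lemma block_mx_modE (R : Type) n (A B C D : 'M[R]_n) (i j : 'I_(n + n)) (i' j' : 'I_n) :
  (i %% n)%N = i' -> (j %% n)%N = j' ->
  block_mx A B C D i j =
    (if (n <= i)%N then if (n <= j)%N then D else C
     else if (n <= j)%N then B else A) i' j'.
Proof.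
move=> /split_ord_mod {1}-> /split_ord_mod {1}->.
by do 2!case: leqP => _; rewrite ?block_mxEul ?block_mxEur ?block_mxEdl ?block_mxEdr.
Qed.

Lemma sylvesterSE p (i j : 'I_(2 ^ p.+1)) (i' j' : 'I_(2 ^ p)) :
  (i %% 2 ^ p)%N = i' -> (j %% 2 ^ p)%N = j' ->
  sylvester p.+1 i j = (-1) ^+ ((2 ^ p <= i) && (2 ^ p <= j))%N * sylvester p i' j'.
Proof.
move=> hi hj; rewrite /= castmxE.
rewrite (block_mx_modE _ _ _ _ (i := cast_ord _ i) (j := cast_ord _ j) hi hj) /=.
by do 2!case: leqP => _; rewrite /= ?mxE ?mulN1r ?mul1r.
Qed.

Lemma sylvester_col0 p (i j : 'I_(2 ^ p)) : j = 0%N :> nat -> sylvester p i j = 1.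
Proof.
elim: p i j => [|p IH] i j hj; first by rewrite /= mxE (ord1 i) (ord1 j).
have h2p : (0 < 2 ^ p)%N by rewrite expn_gt0.
rewrite (@sylvesterSE _ _ _ (Ordinal (ltn_pmod i h2p)) (Ordinal h2p)) //=; last by rewrite hj mod0n.
by rewrite IH // hj leqn0 expn_eq0 andbF mulr1.
Qed.

Lemma sylvester_col1 p (i j : 'I_(2 ^ p.+1)) : j = 1%N :> nat ->
  sylvester p.+1 i j = (-1) ^+ odd i.
Proof.
elim: p i j => [|p IH] i j hj.
  rewrite (@sylvesterSE 0 _ _ ord0 ord0) ?modn1 // hj sylvester_col0 // mulr1 andbT.
  by case: i => [[|[|]]].
have h2p : (1 < 2 ^ p.+1)%N by rewrite -{1}(expn0 2) ltn_exp2l.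
have h2p0 := ltnW h2p.
rewrite (@sylvesterSE _ _ _ (Ordinal (ltn_pmod i h2p0)) (Ordinal h2p)) //=; last by rewrite hj modn_small.
by rewrite IH //= hj (leqNgt _ 1) h2p andbF mul1r odd_mod // oddX.
Qed.

Lemma perm2_cases (s : 'S_2) : s = 1%g \/ s = tperm 0 1.
Proof.
have ord2 (k : 'I_2) : k = 0 \/ k = 1 by case: k => [[|[|//]] ?]; [left|right]; apply: val_inj.
have s10 : s 1 != s 0 by rewrite (inj_eq perm_inj).
case: (ord2 (s 0)) => s0; [left | right]; apply/permP => k;
  case: (ord2 k) => -> {k}; rewrite ?perm1 ?tpermL ?tpermR ?s0 //;
  by case: (ord2 (s 1)) s10 => ->; rewrite s0.
Qed.

Lemma permanent2 (A : 'M[algC]_2) : permanent A = A 0 0 * A 1 1 + A 0 1 * A 1 0.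
Proof.
have t01 : tperm 0 1 != 1%g :> 'S_2 by apply/eqP => /permP /(_ 0); rewrite perm1 tpermL.
rewrite /permanent (bigD1 1%g) //= (big_pred1 (tperm 0 1)); last first.
  by move=> s; case: (perm2_cases s) => -> /=; rewrite ?t01 eqxx // eq_sym (negPf t01).
rewrite !big_ord_recr !big_ord0 /= !mul1r !perm1 !permE.
by congr (A _ _ * A _ _ + A _ _ * A _ _); apply: val_inj.
Qed.

Lemma suppressedE m n (U : 'M[algC]_m) (s t : n.-tuple 'I_m) :
  suppressed U s t = (permanent (scattering U s t) == 0).
Proof.
rewrite /suppressed /amplitude mulf_eq0 invr_eq0 sqrtC_eq0 pnatr_eq0 eqn0Ngt.
by rewrite muln_gt0 !prodn_gt0 ?orbF // => k; apply: fact_gt0.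
Qed.

Lemma signr_addr_eq0 (R : numDomainType) (a b : bool) :
  ((-1) ^+ a + (-1) ^+ b == 0 :> R) = (a != b).
Proof.
have two_neq0 : (1 + 1 : R) != 0 by rewrite -mulr2n pnatr_eq0.
case: a; case: b; rewrite /= ?expr1 ?expr0 ?subrr ?addNr ?eqxx ?(negPf two_neq0) //.
by rewrite -oppr_eq0 opprB opprK (negPf two_neq0).
Qed.

Lemma sylvester_suppressed p (s t : 2.-tuple 'I_(2 ^ p.+1)) :
  map val s = [:: 0%N; 1%N] ->
  suppressed (sylvU p.+1) s t = (odd (tnth t ord0) != odd (tnth t ord_max)).
Proof.
case: s => [[|a [|b [|//]]] // hsz] /= [ha hb].
case: t => [[|i [|j [|//]]] // htsz].
rewrite suppressedE permanent2 !mxE !(sylvester_col0 _ ha) !(sylvester_col1 _ hb) /=.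
set c := (sqrtC _)^-1.
have c_neq0 : c != 0 by rewrite invr_eq0 sqrtC_eq0 pnatr_eq0 expn_eq0.
rewrite (_ : _ + _ = c ^+ 2 * ((-1) ^+ odd i + (-1) ^+ odd j)); last by ring.
by rewrite mulf_eq0 expf_eq0 (negPf c_neq0) andbF signr_addr_eq0.
Qed.

Lemma ratio_square_oblong (k : nat) : (0 < k)%N ->
  (k * k)%:R / (k * (2 * k + 1))%:R = 1 / 2 * ((2 * k)%:R / (2 * k + 1)%:R) :> rat.
Proof.
move=> k_gt0; have k_neq0 : k%:R != 0 :> rat by rewrite pnatr_eq0 -lt0n.
have oblong_neq0 : (2 * k + 1)%:R != 0 :> rat by rewrite pnatr_eq0 addn1.
rewrite natrD natrM in oblong_neq0.
by rewrite !natrM; field; rewrite oblong_neq0 k_neq0.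
Qed.

Local Close Scope ring_scope.

Lemma card_tuple2 n (Q : pred (2.-tuple 'I_n)) :
  #|[set t | Q t]| = \sum_(i < n) \sum_(j < n) Q [tuple i; j].
Proof.
rewrite cardsE -sum1_card big_mkcond /= pair_big /=.
rewrite (reindex (fun x : 'I_n * 'I_n => [tuple x.1; x.2])) /=; last first.
  exists (fun t : 2.-tuple 'I_n => (tnth t ord0, tnth t ord_max)) => [[a b] // | t _].
  by case: t => [[|a [|b [|//]]] // ht]; apply: val_inj.
by apply: eq_bigr => -[a b] _; rewrite unfold_in; case: (Q _).
Qed.

Lemma sum_leq_sym n (P : 'I_n -> 'I_n -> bool) : (forall i j, P i j = P j i) ->
  2 * \sum_(i < n) \sum_(j < n) ((i <= j) && P i j)
    = \sum_(i < n) \sum_(j < n) P i j + \sum_(i < n) P i i.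
Proof.
move=> Psym; rewrite mul2n -addnn {2}exchange_big -!big_split /=.
apply: eq_bigr => i _; rewrite -big_split (bigD1 i) //= [\sum_(j < n) P i j](bigD1 i) //=.
rewrite leqnn (eq_bigr (fun j => P i j : nat)) => [|j ji]; first lia.
rewrite (Psym j); case: (P i j); rewrite ?andbF ?andbT //=.
by case: ltngtP ji => // /val_inj ->; rewrite eqxx.
Qed.

Lemma sum_odd_ord n : \sum_(i < n) odd i = n./2.
Proof.
elim: n => [|n IH]; first by rewrite big_ord0.
by rewrite big_ord_recr /= IH uphalf_half addnC.
Qed.

Lemma sum_even_ord n : \sum_(i < n) ~~ odd i = uphalf n.
Proof.
elim: n => [|n IH]; first by rewrite big_ord0.
by rewrite big_ord_recr /= IH !uphalf_half /=; case: (odd n) => /=; lia.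
Qed.

Lemma sum_odd_neq n :
  \sum_(i < n) \sum_(j < n) (odd i != odd j) = 2 * (n./2 * uphalf n).
Proof.
rewrite (eq_bigr (fun i : 'I_n => odd i * uphalf n + ~~ odd i * n./2)) => [|i _].
  by rewrite big_split /= -!big_distrl /= sum_odd_ord sum_even_ord; lia.
rewrite -sum_odd_ord -sum_even_ord; case: (odd i) => /=; rewrite ?mul1n ?mul0n ?addn0 //.
by apply: eq_bigr => j _; case: odd.
Qed.

Lemma card_states2 n : #|[set t : 2.-tuple 'I_n | is_state t]| = n * (n + 1) %/ 2.
Proof.
suff <- : 2 * #|[set t : 2.-tuple 'I_n | is_state t]| = n * (n + 1) by rewrite mulKn.
rewrite card_tuple2 (eq_bigr (fun i : 'I_n => \sum_(j < n) ((i <= j) && true))) => [|i _].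
  by rewrite sum_leq_sym // !big_const_ord !iter_addn_0 /=; lia.
by apply: eq_bigr => j _; rewrite /is_state /= !andbT.
Qed.

Lemma card_states2_odd_neq n :
  #|[set t : 2.-tuple 'I_n | is_state t && (odd (tnth t ord0) != odd (tnth t ord_max))]|
    = n./2 * uphalf n.
Proof.
apply/eqP; rewrite -(eqn_pmul2l (isT : 0 < 2)) card_tuple2; apply/eqP.
rewrite (eq_bigr (fun i : 'I_n => \sum_(j < n) ((i <= j) && (odd i != odd j)))) => [|i _].
  rewrite sum_leq_sym => [|i j]; last by rewrite eq_sym.
  by rewrite sum_odd_neq big1 ?addn0 // => i _; rewrite eqxx.
by apply: eq_bigr => j _; rewrite /is_state /= andbT.
Qed.

Theorem corollary1 (p : nat) (s : 2.-tuple 'I_(2 ^ p)) :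
  (0 < p)%N ->
  map val s = [:: 0%N; 1%N] ->
  let m := (2 ^ p)%N in
  let states := [set t : 2.-tuple 'I_(2 ^ p) | is_state t] in
  let supp := [set t : 2.-tuple 'I_(2 ^ p) | is_state t && suppressed (sylvU p) s t] in
  [/\ #|states| = ((m * (m + 1)) %/ 2)%N,
      #|supp| = ((m ^ 2) %/ 4)%N
    & ((#|supp|%:R / #|states|%:R : rat) = (1 / 2) * (m%:R / (m + 1)%N%:R))%R].
Proof.
case: p s => [//|p] s _ hs m states supp.
have -> : supp = [set t | is_state t && (odd (tnth t ord0) != odd (tnth t ord_max))].
  by apply/setP => t; rewrite !inE sylvester_suppressed.
rewrite card_states2 card_states2_odd_neq.
have k_gt0 : 0 < 2 ^ p by rewrite expn_gt0.
rewrite /m expnS mul2n uphalf_double doubleK -mul2n.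
move: (2 ^ p) k_gt0 => k k_gt0.
have -> : 2 * k * (2 * k + 1) %/ 2 = k * (2 * k + 1) by rewrite -mulnA mulKn.
have -> : (2 * k) ^ 2 %/ 4 = k * k by rewrite expnMn mulKn // mulnn.
split=> //; exact: ratio_square_oblong.
Qed.
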